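(* Let $P$ be a bounded complete dcpo. If $\Sigma P\times\Sigma P$ is a Fréchet space, then $\Sigma P$ is sober.
   Context: A dcpo is a poset in which every directed subset has a supremum; it is bounded complete if every subset having an upper bound has a supremum. $\Sigma P$ denotes $P$ with the Scott topology (a set $U$ is Scott open iff $U$ is an upper set and for every directed $D$, $\bigvee D\in U$ implies $D\cap U\neq\emptyset$). A topological space is Fréchet if whenever $x$ lies in the closure of a set $A$, some sequence in $A$ converges to $x$. A $T_0$ space is sober if every irreducible closed set equals $\overline{\{x\}}$ for some point $x$. *)

From mathcomp Require Import all_boot all_order.
Set Implicit Arguments. Unset Strict Implicit. Unset Printing Implicit Defensive.
Import Order.TTheory.
Local Open Scope order_scope.

Section Posets.
Context {disp : Order.disp_t} {P : porderType disp}.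

Definition is_upper_bound (A : P -> Prop) (u : P) : Prop :=
  forall a, A a -> a <= u.

Definition is_sup (A : P -> Prop) (s : P) : Prop :=
  is_upper_bound A s /\ forall u, is_upper_bound A u -> s <= u.

Definition directed (D : P -> Prop) : Prop :=
  (exists d, D d) /\
  forall x y, D x -> D y -> exists z, D z /\ x <= z /\ y <= z.

Definition dcpo : Prop :=
  forall D : P -> Prop, directed D -> exists s, is_sup D s.

Definition bounded_complete : Prop :=
  forall A : P -> Prop, (exists u, is_upper_bound A u) -> exists s, is_sup A s.

Definition upper_set (U : P -> Prop) : Prop :=
  forall x y, U x -> x <= y -> U y.

Definition scott_open (U : P -> Prop) : Prop :=
  upper_set U /\
  forall D : P -> Prop, directed D -> forall s, is_sup D s -> U s ->
    exists d, D d /\ U d.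

End Posets.

Section Topology.
Context {T : Type} (op : (T -> Prop) -> Prop).

Definition closed_in (F : T -> Prop) : Prop := op (fun x => ~ F x).

Definition closure_in (A : T -> Prop) (x : T) : Prop :=
  forall U, op U -> U x -> exists a, U a /\ A a.

Definition seq_converges (u : nat -> T) (x : T) : Prop :=
  forall U, op U -> U x -> exists N, forall n, (N <= n)%N -> U (u n).

Definition frechet : Prop :=
  forall (A : T -> Prop) x, closure_in A x ->
    exists u : nat -> T, (forall n, A (u n)) /\ seq_converges u x.

Definition T0 : Prop :=
  forall x y, x <> y -> exists U, op U /\ ~ (U x <-> U y).

Definition irreducible_closed (F : T -> Prop) : Prop :=
  closed_in F /\ (exists x, F x) /\
  forall F1 F2, closed_in F1 -> closed_in F2 ->
    (forall x, F x -> F1 x \/ F2 x) ->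
    (forall x, F x -> F1 x) \/ (forall x, F x -> F2 x).

Definition sober : Prop :=
  T0 /\ forall F, irreducible_closed F ->
    exists x, forall y, F y <-> closure_in (fun z => z = x) y.

End Topology.

Definition product_open {S T : Type} (opS : (S -> Prop) -> Prop)
  (opT : (T -> Prop) -> Prop) (W : S * T -> Prop) : Prop :=
  forall p, W p -> exists U V, opS U /\ opT V /\ U p.1 /\ V p.2 /\
    forall a b, U a -> V b -> W (a, b).

(* The Scott topology is always T0, and a Scott-closed set that is directed is the closure
   of its supremum; so it suffices to show that an irreducible closed set F is directed.
   For a, b in F, irreducibility puts (a, b) in the closure of the diagonal of F, and the
   Fréchet property yields one sequence c in F converging to both a and b.  Bounded
   completeness makes the set of points having a common upper bound with b inside F
   Scott closed; adding to it the lower set of a tail of c keeps it closed, because a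
   point outside it is below only finitely many terms of c.  Since c converges to a,
   the point a lies in all these closed sets, and this forces a common upper bound of a
   and b in F. *)
From mathcomp Require Import all_boot all_order.
From Stdlib Require Import Classical FunctionalExtensionality PropExtensionality.
Set Implicit Arguments. Unset Strict Implicit. Unset Printing Implicit Defensive.
Import Order.TTheory.
Local Open Scope order_scope.

Section Topology.
Variables (T : Type) (op : (T -> Prop) -> Prop).

Lemma open_compl_closed (U : T -> Prop) : op U -> closed_in op (fun x => ~ U x).
Proof.
rewrite /closed_in (_ : (fun x => ~ ~ U x) = U) //.
apply: functional_extensionality => x; apply: propositional_extensionality.
by split => [/NNPP|Ux nUx].
Qed.

Lemma irreducible_diagonal_closure (F : T -> Prop) a b :
  irreducible_closed op F -> F a -> F b ->
  closure_in (product_open op op) (fun p => F p.1 /\ p.1 = p.2) (a, b).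
Proof.
move=> [_ [_ irrF]] Fa Fb W oW Wab.
have [U [V [oU [oV [Ua [Vb UVW]]]]]] := oW _ Wab.
case: (classic (exists c, F c /\ U c /\ V c)) => [[c [Fc [Uc Vc]]]|noc].
  by exists (c, c); split; [exact: UVW | split].
have cover x : F x -> ~ U x \/ ~ V x.
  by move=> Fx; apply: NNPP => /not_or_and [/NNPP Ux /NNPP Vx]; apply: noc; exists x.
case: (irrF _ _ (open_compl_closed oU) (open_compl_closed oV) cover) => hF.
- by case: (hF a Fa).
- by case: (hF b Fb).
Qed.

End Topology.

Lemma seq_converges_fst (S T : Type) (opS : (S -> Prop) -> Prop)
    (opT : (T -> Prop) -> Prop) (u : nat -> S * T) p :
  opT (fun _ => True) -> seq_converges (product_open opS opT) u p ->
  seq_converges opS (fun n => (u n).1) p.1.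
Proof.
move=> opT_full up U oU Up; apply: (up (fun q => U q.1)) => // q Uq.
by exists U, (fun _ => True).
Qed.

Lemma seq_converges_snd (S T : Type) (opS : (S -> Prop) -> Prop)
    (opT : (T -> Prop) -> Prop) (u : nat -> S * T) p :
  opS (fun _ => True) -> seq_converges (product_open opS opT) u p ->
  seq_converges opT (fun n => (u n).2) p.2.
Proof.
move=> opS_full up V oV Vp; apply: (up (fun q => V q.2)) => // q Vq.
by exists (fun _ => True), V.
Qed.

Section ScottTopology.
Context {disp : Order.disp_t} {P : porderType disp}.

Lemma scott_open_setT : scott_open (fun _ : P => True).
Proof. by split => // D [[d Dd] _] s _ _; exists d. Qed.

Lemma scott_open_not_le (y : P) : scott_open (fun z => ~ z <= y).
Proof.
split=> [x x' nxy xx' x'y|D dD s [_ s_least] nsy]; first exact/nxy/(le_trans xx').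
apply: NNPP => noD; apply/nsy/s_least => d Dd.
by apply: NNPP => ndy; apply: noD; exists d.
Qed.

Lemma scott_closed_le (F : P -> Prop) x y :
  closed_in scott_open F -> F y -> x <= y -> F x.
Proof. by move=> [upF _] Fy xy; apply: NNPP => nFx; exact: upF x y nFx xy Fy. Qed.

Lemma scott_closed_sup (F : P -> Prop) (D : P -> Prop) s :
  closed_in scott_open F -> directed D -> (forall d, D d -> F d) ->
  is_sup D s -> F s.
Proof.
move=> [_ scF] dD DF sD; apply: NNPP => nFs.
by have [d [Dd nFd]] := scF D dD s sD nFs; exact/nFd/DF.
Qed.

Lemma scott_closedI (F : P -> Prop) :
  (forall x y, F y -> x <= y -> F x) ->
  (forall D s, directed D -> (forall d, D d -> F d) -> is_sup D s -> F s) ->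
  closed_in scott_open F.
Proof.
move=> Fdown Fsup; split=> [x y nFx xy Fy|D dD s sD nFs]; first exact/nFx/(Fdown _ _ Fy).
apply: NNPP => noD; apply/nFs/(Fsup D) => // d Dd.
by apply: NNPP => nFd; apply: noD; exists d.
Qed.

Lemma scott_closure1 (s y : P) :
  closure_in scott_open (fun z => z = s) y <-> y <= s.
Proof.
split=> [cly|ys U [upU _] Uy]; last by exists s; split => //; exact: upU y s Uy ys.
apply: NNPP => nys; case: (cly _ (scott_open_not_le s) nys) => w [nws ws].
by apply: nws; rewrite ws.
Qed.

Lemma scott_T0 : T0 (@scott_open disp P).
Proof.
move=> x y neq_xy; case: (classic (x <= y)) => [xy|nxy].
- exists (fun z => ~ z <= x); split; first exact: scott_open_not_le.
  move=> [_ yUx]; apply: (yUx _ (lexx x)) => yx.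
  by apply: neq_xy; apply/le_anti; rewrite xy yx.
- exists (fun z => ~ z <= y); split; first exact: scott_open_not_le.
  by move=> [xUy _]; exact: xUy nxy (lexx y).
Qed.

Lemma scott_closed_directed_down (F : P -> Prop) s :
  closed_in scott_open F -> directed F -> is_sup F s -> forall y, F y <-> y <= s.
Proof.
move=> cF dF sF y; split=> [Fy|ys]; first exact: sF.1.
exact: scott_closed_le cF (scott_closed_sup cF dF (fun _ Fd => Fd) sF) ys.
Qed.

End ScottTopology.

Section DirectedSets.
Context {disp : Order.disp_t} {P : porderType disp}.

Lemma directed_up (D : P -> Prop) d0 :
  directed D -> D d0 -> directed (fun d => D d /\ d0 <= d).
Proof.
move=> [_ dD] Dd0; split; first by exists d0.
move=> x y [Dx d0x] [Dy d0y]; have [z [Dz [xz yz]]] := dD x y Dx Dy.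
by exists z; do !split => //; exact: le_trans d0x xz.
Qed.

Lemma directed_up_le (D : P -> Prop) d0 x :
  directed D -> D d0 -> (forall d, D d -> d0 <= d -> d <= x) ->
  forall d, D d -> d <= x.
Proof.
move=> [_ dD] Dd0 upx d Dd; have [z [Dz [dz d0z]]] := dD d d0 Dd Dd0.
exact: le_trans dz (upx z Dz d0z).
Qed.

Lemma directed_le_seq (s : seq P) (D : P -> Prop) :
  directed D -> (forall d, D d -> exists2 x, x \in s & d <= x) ->
  exists2 x, x \in s & forall d, D d -> d <= x.
Proof.
elim: s D => [|x s IHs] D dD Ds.
  by have [[d Dd] _] := dD; have [] := Ds d Dd.
case: (classic (forall d, D d -> d <= x)) => [Dx|]; first by exists x; rewrite ?mem_head.
move=> /not_all_ex_not [d1 nd1]; have [Dd1 nd1x] := imply_to_and _ _ nd1.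
have [|y ys Dy] := IHs _ (directed_up dD Dd1).
  move=> d [Dd d1d]; have [y] := Ds d Dd.
  rewrite in_cons => /orP [/eqP -> dx|ys dy]; last by exists y.
  by case: nd1x; exact: le_trans d1d dx.
exists y; first by rewrite in_cons ys orbT.
by apply: directed_up_le dD Dd1 _ => d Dd d1d; exact: Dy.
Qed.

Lemma is_sup2P (x y j : P) :
  is_sup (fun w => w = x \/ w = y) j <->
  [/\ x <= j, y <= j & forall z, x <= z -> y <= z -> j <= z].
Proof.
split=> [[ub least]|[xj yj least]].
  by split=> [||z xz yz]; [apply: ub; left | apply: ub; right | apply: least => w [->|->]].
by split=> [w [->|->] //|z ub]; apply: least; apply: ub; [left | right].
Qed.

Lemma bounded_complete_sup2 (x y z : P) :
  @bounded_complete disp P -> x <= z -> y <= z ->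
  exists j, is_sup (fun w => w = x \/ w = y) j.
Proof. by move=> bc xz yz; apply: bc; exists z => w [->|->]. Qed.

End DirectedSets.

Section CommonUpperBounds.
Context {disp : Order.disp_t} {P : porderType disp}.

Definition ub_in (F : P -> Prop) (x y : P) : Prop := exists z, F z /\ x <= z /\ y <= z.

Lemma ub_inC (F : P -> Prop) x y : ub_in F x y -> ub_in F y x.
Proof. by move=> [z [Fz [xz yz]]]; exists z. Qed.

Lemma ub_in_le (F : P -> Prop) u x y : ub_in F u y -> x <= y -> ub_in F u x.
Proof.
by move=> [z [Fz [uz yz]]] xy; exists z; do !split => //; exact: le_trans xy yz.
Qed.

Hypotheses (dc : @dcpo disp P) (bc : @bounded_complete disp P).
Variable F : P -> Prop.
Hypothesis cF : closed_in scott_open F.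

Lemma ub_in_sup u (D : P -> Prop) s :
  directed D -> (forall d, D d -> ub_in F u d) -> is_sup D s -> ub_in F u s.
Proof.
move=> dD Du [sD s_least]; have [[d0 Dd0] dD2] := dD.
have join d : D d -> exists j, is_sup (fun w => w = u \/ w = d) j.
  by move=> Dd; have [z [_ [uz dz]]] := Du d Dd; exact: bounded_complete_sup2 bc uz dz.
pose J j := exists2 d, D d & is_sup (fun w => w = u \/ w = d) j.
have JF j : J j -> F j.
  move=> [d Dd /is_sup2P [_ _ j_least]]; have [z [Fz [uz dz]]] := Du d Dd.
  exact: scott_closed_le cF Fz (j_least z uz dz).
have dJ : directed J.
  split; first by have [j0 j0sup] := join d0 Dd0; exists j0, d0.
  move=> j1 j2 [d1 Dd1 /is_sup2P [_ _ j1_least]] [d2 Dd2 /is_sup2P [_ _ j2_least]].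
  have [d3 [Dd3 [d13 d23]]] := dD2 d1 d2 Dd1 Dd2.
  have [j3 j3sup] := join d3 Dd3; have /is_sup2P [uj3 d3j3 _] := j3sup.
  exists j3; split; first by exists d3.
  by split; [apply: j1_least | apply: j2_least] => //; apply: le_trans d3j3.
have [z zJ] := dc dJ.
exists z; split; first exact: scott_closed_sup cF dJ JF zJ.
have below_z d : D d -> u <= z /\ d <= z.
  move=> Dd; have [j jsup] := join d Dd; have /is_sup2P [uj dj _] := jsup.
  by have jz := zJ.1 j (ex_intro2 _ _ d Dd jsup); split; apply: le_trans jz.
by split; [exact: (below_z d0 Dd0).1 | apply: s_least => d /below_z []].
Qed.

Lemma ub_in_closed u : closed_in scott_open (ub_in F u).
Proof.
apply: scott_closedI => [x y uy xy|D s dD Du sD]; first exact: ub_in_le uy xy.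
exact: ub_in_sup dD Du sD.
Qed.

End CommonUpperBounds.

Section DoublyConvergentSequence.
Context {disp : Order.disp_t} {P : porderType disp}.
Hypotheses (dc : @dcpo disp P) (bc : @bounded_complete disp P).
Variable F : P -> Prop.
Hypothesis cF : closed_in scott_open F.
Variable c : nat -> P.
Hypothesis Fc : forall n, F (c n).
Variable b : P.
Hypothesis cb : seq_converges scott_open c b.

Lemma eventually_not_le_of_not_ub_in d :
  ~ ub_in F b d -> exists N, forall n, (N <= n)%N -> ~ d <= c n.
Proof.
move=> nbd; have [N evN] := cb (ub_in_closed dc bc cF d) (fun db => nbd (ub_inC db)).
by exists N => n /evN ndcn dcn; apply: ndcn; exists (c n); do !split => //; exact: lexx.
Qed.

Lemma ub_in_of_frequently_le d :
  (forall M, exists2 n, (M <= n)%N & d <= c n) -> ub_in F b d.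
Proof.
move=> freq; apply: NNPP => nbd; have [N evN] := eventually_not_le_of_not_ub_in nbd.
by have [n Nn dcn] := freq N; exact: evN n Nn dcn.
Qed.

Definition ub_in_or_le_tail (M : nat) (x : P) : Prop :=
  ub_in F b x \/ exists2 n, (M <= n)%N & x <= c n.

(* A directed set escaping [ub_in F b] eventually lies above some [d0] that is below only
   the finitely many terms [c n], [M <= n < N0]; one of them then bounds the whole set. *)
Lemma ub_in_or_le_tail_closed M : closed_in scott_open (ub_in_or_le_tail M).
Proof.
apply: scott_closedI => [x y [bUy|[n Mn ycn]] xy|D s dD DG sD].
- by left; exact: ub_in_le bUy xy.
- by right; exists n => //; exact: le_trans xy ycn.
case: (classic (ub_in F b s)) => [|nbs]; [by left | right].
have [d0 [Dd0 nbd0]] : exists d0, D d0 /\ ~ ub_in F b d0.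
  apply: NNPP => allD; apply/nbs/(ub_in_sup dc bc cF dD _ sD) => d Dd.
  by apply: NNPP => nbd; apply: allD; exists d.
have [N0 evN0] := eventually_not_le_of_not_ub_in nbd0.
have le_window d : D d /\ d0 <= d ->
    exists2 x, x \in [seq c n | n <- iota M (N0 - M)] & d <= x.
  move=> [Dd d0d]; case: (DG d Dd) => [bd|[n Mn dcn]].
    by case: nbd0; exact: ub_in_le bd d0d.
  have nN0 : (n < N0)%N.
    by rewrite ltnNge; apply/negP => N0n; exact: evN0 n N0n (le_trans d0d dcn).
  exists (c n) => //; apply: map_f.
  by rewrite mem_iota Mn subnKC ?nN0 // (leq_trans Mn (ltnW nN0)).
have [x /mapP [n + ->] Dx] := directed_le_seq (directed_up dD Dd0) le_window.
rewrite mem_iota => /andP [Mn _]; exists n => //.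
apply: sD.2; apply: directed_up_le dD Dd0 _ => d Dd d0d; exact: Dx.
Qed.

Lemma ub_in_of_seq_converges a : seq_converges scott_open c a -> ub_in F a b.
Proof.
move=> ca; apply: ub_inC; case: (classic (ub_in F b a)) => // nba.
apply: ub_in_of_frequently_le => M.
have : ub_in_or_le_tail M a.
  apply: NNPP => naM; have [N evN] := ca _ (ub_in_or_le_tail_closed M) naM.
  apply: (evN (maxn N M) (leq_maxl _ _)); right.
  by exists (maxn N M); [exact: leq_maxr | exact: lexx].
by case.
Qed.

End DoublyConvergentSequence.

Lemma frechet_irreducible_directed (disp : Order.disp_t) (P : porderType disp)
    (F : P -> Prop) :
  @dcpo disp P -> @bounded_complete disp P ->
  frechet (product_open (@scott_open disp P) (@scott_open disp P)) ->
  irreducible_closed scott_open F -> directed F.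
Proof.
move=> dc bc fr irrF; have [cF [[x0 Fx0] _]] := irrF; split; first by exists x0.
move=> a b Fa Fb.
have [u [Du cu]] := fr _ _ (irreducible_diagonal_closure irrF Fa Fb).
have ca := seq_converges_fst scott_open_setT cu.
have cb : seq_converges scott_open (fun n => (u n).1) b.
  move=> U oU Ub; have [N evN] := seq_converges_snd scott_open_setT cu oU Ub.
  by exists N => n /evN; rewrite (Du n).2.
have [z [Fz [az bz]]] := ub_in_of_seq_converges dc bc cF (fun n => (Du n).1) cb ca.
by exists z.
Qed.

Theorem corollary3p8 (disp : Order.disp_t) (P : porderType disp) :
  @dcpo disp P -> @bounded_complete disp P ->
  frechet (product_open (@scott_open disp P) (@scott_open disp P)) ->
  sober (@scott_open disp P).
Proof.
move=> dc bc fr; split=> [|F irrF]; first exact: scott_T0.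
have dF := frechet_irreducible_directed dc bc fr irrF.
have [s sF] := dc F dF; exists s => y.
rewrite scott_closure1; exact: scott_closed_directed_down irrF.1 dF sF y.
Qed.
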